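(* Let $G$ be a group with $\mathrm{cl}(G)<\infty$ and let $1\to\mathbb{Z}_2\to\tilde G\to G\to 1$ be any double cover (short exact sequence of groups with kernel of order $2$). Then $\mathrm{cl}(\tilde G)<\infty$.
   Context: $[a,b]=aba^{-1}b^{-1}$. For a group $G$ and $x\in[G,G]$, $\mathrm{cl}_G(x)$ is the least $k\ge0$ with $x$ a product of $k$ commutators of elements of $G$; the commutator width is $\mathrm{cl}(G)=\sup_{x\in[G,G]}\mathrm{cl}_G(x)\in\mathbb{Z}_{\ge0}\cup\{\infty\}$. *)

From Stdlib Require Import List Arith.
Import ListNotations.

(* A group: associative operation, left identity, left inverses
   (these axioms characterize groups). *)
Record group := Group {
  carrier :> Type;
  gmul : carrier -> carrier -> carrier;
  ginv : carrier -> carrier;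
  gone : carrier;
  gmulA : forall x y z, gmul x (gmul y z) = gmul (gmul x y) z;
  gmul1l : forall x, gmul gone x = x;
  gmulVl : forall x, gmul (ginv x) x = gone
}.

Arguments gmul {g} _ _.
Arguments ginv {g} _.
Arguments gone {g}.

Definition comm {G : group} (a b : G) : G :=
  gmul a (gmul b (gmul (ginv a) (ginv b))).

Definition prod_comms {G : group} (l : list (G * G)) : G :=
  fold_right (fun p acc => gmul (comm (fst p) (snd p)) acc) gone l.

Definition is_prod_of_comms {G : group} (k : nat) (x : G) : Prop :=
  exists l : list (G * G), length l = k /\ prod_comms l = x.

Definition in_derived {G : group} (x : G) : Prop :=
  exists k, is_prod_of_comms k x.

Definition cl_le {G : group} (x : G) (N : nat) : Prop :=
  exists k, k <= N /\ is_prod_of_comms k x.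

Definition finite_commutator_width (G : group) : Prop :=
  exists N : nat, forall x : G, in_derived x -> cl_le x N.

Definition is_hom {H G : group} (f : H -> G) : Prop :=
  forall x y : H, f (gmul x y) = gmul (f x) (f y).

(* 1 -> Z_2 -> Gt -> G -> 1 exact: p a surjective homomorphism whose kernel
   has exactly two elements (hence is cyclic of order 2). *)
Definition double_cover (Gt G : group) (p : Gt -> G) : Prop :=
  is_hom p /\ (forall y : G, exists x : Gt, p x = y) /\
  exists z : Gt, z <> gone /\ p z = gone /\
    (forall x : Gt, p x = gone -> x = gone \/ x = z).

(* If [p : Gt -> G] is onto with kernel [K], any [x] in [[Gt,Gt]] factors as
   [x = y c] where [y] is a lift of a shortest commutator expression of [p x]
   and [c = y^-1 x] lies in [K] and in [[Gt,Gt]]. Hence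
   [cl(Gt) <= cl(G) + max {cl(c) | c in K, c in [Gt,Gt]}], and the maximum is
   finite when [K] has only two elements. *)

From Stdlib Require Import List Lia Classical.
Import ListNotations.

Section GroupLemmas.
Variable G : group.
Implicit Types x y a b : G.

Lemma gmulVr x : gmul x (ginv x) = gone.
Proof.
  assert (Hidem : gmul (gmul x (ginv x)) (gmul x (ginv x)) = gmul x (ginv x)).
  { rewrite <- gmulA, (gmulA _ (ginv x) x), gmulVl, gmul1l. reflexivity. }
  rewrite <- (gmulVl _ (gmul x (ginv x))).
  rewrite <- Hidem at 3. rewrite gmulA, gmulVl, gmul1l. reflexivity.
Qed.

Lemma gmul1r x : gmul x gone = x.
Proof. rewrite <- (gmulVl _ x), gmulA, gmulVr, gmul1l. reflexivity. Qed.

Lemma gmulKl x y : gmul (ginv x) (gmul x y) = y.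
Proof. rewrite gmulA, gmulVl, gmul1l. reflexivity. Qed.

Lemma gmulKr x y : gmul x (gmul (ginv x) y) = y.
Proof. rewrite gmulA, gmulVr, gmul1l. reflexivity. Qed.

Lemma gmulI a x y : gmul a x = gmul a y -> x = y.
Proof. intro E. rewrite <- (gmulKl a x), E, gmulKl. reflexivity. Qed.

Lemma ginv_unique x y : gmul x y = gone -> y = ginv x.
Proof. intro E. apply (gmulI x). rewrite E, gmulVr. reflexivity. Qed.

Lemma ginvM x y : ginv (gmul x y) = gmul (ginv y) (ginv x).
Proof. symmetry. apply ginv_unique. rewrite <- !gmulA, gmulKr, gmulVr. reflexivity. Qed.

Lemma ginv_comm a b : ginv (comm a b) = comm b a.
Proof.
  symmetry. apply ginv_unique. unfold comm. rewrite <- !gmulA.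
  rewrite !gmulKl, gmulKr, gmulVr. reflexivity.
Qed.

Lemma prod_comms_cat (l1 l2 : list (G * G)) :
  prod_comms (l1 ++ l2) = gmul (prod_comms l1) (prod_comms l2).
Proof.
  induction l1 as [|[a b] l IH]; simpl.
  - rewrite gmul1l. reflexivity.
  - rewrite IH, gmulA. reflexivity.
Qed.

Lemma ginv_prod_comms (l : list (G * G)) :
  ginv (prod_comms l) = prod_comms (rev (map (fun q => (snd q, fst q)) l)).
Proof.
  induction l as [|[a b] l IH]; simpl.
  - symmetry. apply ginv_unique. apply gmul1l.
  - rewrite prod_comms_cat, ginvM, IH, ginv_comm; simpl. rewrite gmul1r. reflexivity.
Qed.

Lemma is_prod_of_comms_mul k m x y :
  is_prod_of_comms k x -> is_prod_of_comms m y -> is_prod_of_comms (k + m) (gmul x y).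
Proof.
  intros [l [Hl <-]] [l' [Hl' <-]].
  exists (l ++ l'). rewrite length_app, prod_comms_cat. auto.
Qed.

Lemma cl_le_mul k m x y : cl_le x k -> cl_le y m -> cl_le (gmul x y) (k + m).
Proof.
  intros [i [Hi Hx]] [j [Hj Hy]].
  exists (i + j). split; [lia | apply is_prod_of_comms_mul; assumption].
Qed.

Lemma in_derived_inv x : in_derived x -> in_derived (ginv x).
Proof.
  intros [k [l [_ <-]]]. rewrite ginv_prod_comms. eexists. eexists. split; reflexivity.
Qed.

Lemma in_derived_mul x y : in_derived x -> in_derived y -> in_derived (gmul x y).
Proof.
  intros [k Hx] [m Hy]. exists (k + m). apply is_prod_of_comms_mul; assumption.
Qed.

End GroupLemmas.

Section Homomorphism.
Variables H G : group.
Variable p : H -> G.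
Hypothesis p_hom : is_hom p.

Lemma hom_gone : p gone = gone.
Proof. apply (gmulI _ (p gone)). rewrite <- p_hom, gmul1l, gmul1r. reflexivity. Qed.

Lemma hom_ginv x : p (ginv x) = ginv (p x).
Proof. apply ginv_unique. rewrite <- p_hom, gmulVr. apply hom_gone. Qed.

Lemma hom_prod_comms (l : list (H * H)) :
  p (prod_comms l) = prod_comms (map (fun q => (p (fst q), p (snd q))) l).
Proof.
  induction l as [|[a b] l IH]; simpl.
  - apply hom_gone.
  - unfold comm. rewrite !p_hom, !hom_ginv, IH. reflexivity.
Qed.

Lemma in_derived_hom x : in_derived x -> in_derived (p x).
Proof.
  intros [k [l [Hl <-]]]. rewrite hom_prod_comms.
  exists k, (map (fun q => (p (fst q), p (snd q))) l). rewrite length_map. auto.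
Qed.

Hypothesis p_surj : forall y : G, exists x : H, p x = y.

Lemma is_prod_of_comms_lift k y :
  is_prod_of_comms k y -> exists x, p x = y /\ is_prod_of_comms k x.
Proof.
  intros [l [Hl <-]]. revert k Hl.
  induction l as [|[a b] l IH]; intros k Hl; simpl in Hl; subst k.
  - exists gone. split; [apply hom_gone | exists []; auto].
  - destruct (IH _ eq_refl) as [x [Hpx Hx]].
    destruct (p_surj a) as [a' <-], (p_surj b) as [b' <-].
    exists (gmul (comm a' b') x). split.
    + rewrite p_hom, Hpx. unfold comm. rewrite !p_hom, !hom_ginv. reflexivity.
    + apply (is_prod_of_comms_mul _ 1). { exists [(a', b')]. simpl. rewrite gmul1r. auto. }
      exact Hx.
Qed.

Lemma finite_commutator_width_extension (m : nat) :
  (forall c : H, p c = gone -> in_derived c -> cl_le c m) ->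
  finite_commutator_width G -> finite_commutator_width H.
Proof.
  intros Hker [N HN]. exists (N + m). intros x Hx.
  destruct (HN _ (in_derived_hom _ Hx)) as [k [Hk Hpx]].
  destruct (is_prod_of_comms_lift _ _ Hpx) as [y [Hpy Hy]].
  set (c := gmul (ginv y) x).
  assert (Hc_ker : p c = gone) by (unfold c; rewrite p_hom, hom_ginv, Hpy; apply gmulVl).
  assert (Hc_der : in_derived c) by (apply in_derived_mul; [apply in_derived_inv; exists k|]; assumption).
  replace x with (gmul y c) by (apply gmulKr).
  apply cl_le_mul; [exists k; auto | apply Hker; assumption].
Qed.

End Homomorphism.

Lemma double_cover_kernel_width (G Gt : group) (p : Gt -> G) :
  double_cover Gt G p ->
  exists m, forall c : Gt, p c = gone -> in_derived c -> cl_le c m.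
Proof.
  intros [_ [_ [z [_ [_ Hker]]]]].
  assert (Hz : exists m, in_derived z -> is_prod_of_comms m z).
  { destruct (classic (in_derived z)) as [[m Hm] | Hn].
    - exists m. auto.
    - exists 0. intro. contradiction. }
  destruct Hz as [m Hm]. exists m. intros c Hc Hder.
  destruct (Hker c Hc) as [-> | ->].
  - exists 0. split; [lia | exists []; auto].
  - exists m. auto.
Qed.

Theorem mainTheorem7 (G Gt : group) (p : Gt -> G) :
  finite_commutator_width G ->
  double_cover Gt G p ->
  finite_commutator_width Gt.
Proof.
  intros HG Hcov.
  destruct (double_cover_kernel_width _ _ _ Hcov) as [m Hker].
  destruct Hcov as [p_hom [p_surj _]].
  exact (finite_commutator_width_extension _ _ _ p_hom p_surj m Hker HG).
Qed.
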